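(* For integers $2\leq n\leq\ell$ and $1\leq k\leq n-1$, let $\mathcal{S}_\ell(n,k)$ denote the set of permutations of $[\ell]$ with exactly $\ell-n$ fixed points and exactly $k$ exceedances. Then $|\mathcal{S}_\ell(n,k)|\leq\binom{\ell}{n}\cdot\theta(n,k)$, where \[\theta(n,k)=\begin{cases}1&\text{if }k=1\text{ or }k=n-1,\\ (2k+3)^n&\text{if }2\leq k<n/2,\\ (2n-2k+5)^n&\text{if }n/2\leq k\leq n-2.\end{cases}\]
   Context: A fixed point of a permutation $\sigma$ of $[\ell]$ is an $i$ with $\sigma(i)=i$; an exceedance is an index $i$ with $\sigma(i)>i$, and the number of exceedances of $\sigma$ is $|\{i:\sigma(i)>i\}|$. *)

From mathcomp Require Import all_boot all_fingroup.
Set Implicit Arguments. Unset Strict Implicit. Unset Printing Implicit Defensive.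

(* Permutations of [l] = {1..l} are modelled as 'S_l, permutations of 'I_l = {0..l-1}
   (shift by one; fixed points and exceedances are invariant under this shift). *)

Definition fixed_points l (s : 'S_l) : {set 'I_l} := [set i : 'I_l | s i == i].
Definition exceedances l (s : 'S_l) : {set 'I_l} := [set i : 'I_l | (i < s i)%N].

Definition Sset (l n k : nat) : {set 'S_l} :=
  [set s : 'S_l | (#|fixed_points s| == l - n) && (#|exceedances s| == k)].

(* theta(n,k); the condition k < n/2 is written 2k < n (real division) *)
Definition theta (n k : nat) : nat :=
  (if (k == 1) || (k == n - 1) then 1
  else if 2 * k < n then (2 * k + 3) ^ n
  else (2 * n - 2 * k + 5) ^ n)%N.

(* A permutation s is recovered from its deficiencies (s i < i), its exceedances (i < s i), and,
   for each moved point i, the rank of s i among the values still available when i is decoded: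
   deficiencies are decoded from left to right, the candidates for s i being the values below i
   not taken by an earlier non-exceedance; exceedances are then decoded from right to left, the
   candidates being the values above i not taken by a non-exceedance or by a later exceedance.
   Both candidate sets have at most k elements, so s is encoded by its support together with a
   word over 2k letters on it, whence |S_l(n,k)| <= C(l,n) (2k)^n.  For k = 1 every rank is 0 and
   the only exceedance is the least moved point, so the support alone determines s.  Conjugating
   by the reversal i |-> l+1-i turns deficiencies into exceedances, which maps S_l(n,k)
   injectively into S_l(n,n-k) and handles k = n-1 and k >= n/2. *)

From mathcomp Require Import all_boot all_fingroup.
From mathcomp Require Import zify.
Set Implicit Arguments. Unset Strict Implicit. Unset Printing Implicit Defensive.

Lemma card_ffun_support (aT rT : finType) (y : rT) n :
  #|[set f : {ffun aT -> rT} | #|y.-support f| == n]| = 'C(#|aT|, n) * #|rT|.-1 ^ n.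
Proof.
rewrite -card_draws -sum1_card -sum_nat_cond_const.
rewrite (partition_big (fun f : {ffun aT -> rT} => [set x | f x != y])
           (fun A : {set aT} => #|A| == n)) => [|f]; last by rewrite !inE cardsE.
apply: eq_bigr => A /eqP cardA.
rewrite sum1dep_card -cardA -(cardC1 y) -(card_pffun_on y).
apply: eq_card => f; rewrite !in_set; apply/idP/pfamilyP => [/andP[_ /eqP <-] | [supp_f f_on]].
  by split=> [|x]; [apply/subsetP=> x | ]; rewrite inE.
have <- : [set x | f x != y] = A.
  apply/setP=> x; rewrite inE; apply/idP/idP => [fx | /f_on]; last by rewrite inE.
  exact: (subsetP supp_f).
by rewrite eqxx andbT; apply/eqP/eq_card => x; rewrite inE.
Qed.

Section Rank.
Variable m : nat.
Implicit Types (U : {set 'I_m}) (u v : 'I_m).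

Definition rank_in U v := #|[set w in U | w < v]|.

Lemma rank_in_mono U u v : u \in U -> v \in U -> u < v -> rank_in U u < rank_in U v.
Proof.
move=> uU vU uv; apply: proper_card; apply/properP; split.
  by apply/subsetP=> w; rewrite !inE => /andP[-> /ltn_trans->].
by exists u; rewrite !inE ?uU ?uv ?ltnn.
Qed.

Lemma rank_in_inj U u v : u \in U -> v \in U -> rank_in U u = rank_in U v -> u = v.
Proof.
move=> uU vU; case: (ltngtP u v) => [uv|vu|/val_inj//] eq_rank.
- by have := rank_in_mono uU vU uv; rewrite eq_rank ltnn.
- by have := rank_in_mono vU uU vu; rewrite eq_rank ltnn.
Qed.

Lemma rank_in_lt_card U v : v \in U -> rank_in U v < #|U|.
Proof.
move=> vU; apply: proper_card; apply/properP; split.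
  by apply/subsetP=> w; rewrite inE => /andP[].
by exists v; rewrite // !inE ltnn andbF.
Qed.

End Rank.

Section Encoding.
Variable l : nat.
Implicit Types (s t : 'S_l) (i j : 'I_l).

Definition deficiencies s : {set 'I_l} := [set i | s i < i].

Definition deficiency_candidates s i : {set 'I_l} :=
  [set j : 'I_l | j < i] :\: s @: [set j : 'I_l | (j < i) && (s j <= j)].

Definition exceedance_candidates s i : {set 'I_l} :=
  [set j : 'I_l | i < j] :\: s @: [set j : 'I_l | (s j <= j) || (i < j)].

Definition deficiency_rank s i := rank_in (deficiency_candidates s i) (s i).
Definition exceedance_rank s i := rank_in (exceedance_candidates s i) (s i).

Lemma mem_deficiency_candidates s i : s i < i -> s i \in deficiency_candidates s i.
Proof. by move=> lt_si; rewrite !inE lt_si (mem_imset _ _ perm_inj) !inE ltnn. Qed.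

Lemma mem_exceedance_candidates s i : i < s i -> s i \in exceedance_candidates s i.
Proof.
by move=> lt_is; rewrite !inE lt_is (mem_imset _ _ perm_inj) !inE ltnn orbF -ltnNge lt_is.
Qed.

Lemma card_deficiency_candidates s i : #|deficiency_candidates s i| <= #|exceedances s|.
Proof.
set L := [set j : 'I_l | j < i]; set N := [set j : 'I_l | (j < i) && (s j <= j)].
have sN_L : s @: N \subset L.
  apply/subsetP=> _ /imsetP[j + ->]; rewrite !inE => /andP[ji sj].
  exact: leq_ltn_trans sj ji.
have N_L : N \subset L by apply/subsetP=> j; rewrite !inE => /andP[].
rewrite cardsD (setIidPr sN_L) (card_imset _ perm_inj) -(setIidPr N_L) -cardsD.
apply: subset_leq_card; apply/subsetP=> j.
by rewrite !inE => /andP[+ ji]; rewrite ji -ltnNge.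
Qed.

Lemma card_exceedance_candidates s i : #|exceedance_candidates s i| <= #|exceedances s|.
Proof.
rewrite -(card_imset (exceedances s) (@perm_inj _ s)); apply: subset_leq_card.
apply/subsetP=> v.
rewrite -{1 2}(permKV s v) inE (mem_imset _ _ perm_inj) inE negb_or -ltnNge.
by case/andP=> /andP[exc _] _; apply: imset_f; rewrite inE.
Qed.

Lemma deficiency_rank_lt s i : s i < i -> deficiency_rank s i < #|exceedances s|.
Proof.
move=> lt_si; apply: leq_trans (card_deficiency_candidates s i).
exact/rank_in_lt_card/mem_deficiency_candidates.
Qed.

Lemma exceedance_rank_lt s i : i < s i -> exceedance_rank s i < #|exceedances s|.
Proof.
move=> lt_is; apply: leq_trans (card_exceedance_candidates s i).
exact/rank_in_lt_card/mem_exceedance_candidates.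
Qed.

End Encoding.

Section Decoding.
Variables (l : nat) (s t : 'S_l).
Implicit Types i j : 'I_l.
Hypothesis deficiencies_st : deficiencies s = deficiencies t.
Hypothesis exceedances_st : exceedances s = exceedances t.
Hypothesis deficiency_rank_st :
  {in deficiencies s, deficiency_rank s =1 deficiency_rank t}.
Hypothesis exceedance_rank_st :
  {in exceedances s, exceedance_rank s =1 exceedance_rank t}.

Let below_st i : (s i < i) = (t i < i).
Proof. by move/setP/(_ i): deficiencies_st; rewrite !inE. Qed.

Let above_st i : (i < s i) = (i < t i).
Proof. by move/setP/(_ i): exceedances_st; rewrite !inE. Qed.

Let weakly_below_st i : (s i <= i) = (t i <= i).
Proof. by rewrite (leqNgt (s i)) (leqNgt (t i)) above_st. Qed.

Lemma decode_nonexceedance i : s i <= i -> s i = t i.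
Proof.
have [m] := ubnP i; elim: m i => // m IH i; rewrite ltnS => le_im.
rewrite leq_eqVlt => /orP[/eqP fixed_i | lt_si].
  apply: val_inj; apply/eqP; rewrite /= fixed_i eq_sym eqn_leq -weakly_below_st.
  by rewrite fixed_i leqnn leqNgt -below_st fixed_i ltnn.
have eq_cand : deficiency_candidates s i = deficiency_candidates t i.
  rewrite /deficiency_candidates; congr (_ :\: _).
  under eq_finset => j do rewrite weakly_below_st.
  apply: eq_in_imset => j; rewrite inE => /andP[lt_ji le_sj].
  by apply: IH; [exact: leq_trans lt_ji le_im | rewrite weakly_below_st].
apply: (@rank_in_inj _ (deficiency_candidates s i)).
- exact: mem_deficiency_candidates lt_si.
- by rewrite eq_cand; apply: mem_deficiency_candidates; rewrite -below_st.
- by move/(_ i): deficiency_rank_st; rewrite inE /deficiency_rank eq_cand; apply.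
Qed.

Lemma decode_exceedance i : i < s i -> s i = t i.
Proof.
have [m] := ubnP (l - i); elim: m i => // m IH i; rewrite ltnS => le_im lt_is.
have eq_cand : exceedance_candidates s i = exceedance_candidates t i.
  rewrite /exceedance_candidates; congr (_ :\: _).
  under eq_finset => j do rewrite weakly_below_st.
  apply: eq_in_imset => j; rewrite inE; case: (leqP (t j) j) => [le_tj _ | lt_jt /= lt_ij].
    by apply: decode_nonexceedance; rewrite weakly_below_st.
  apply: IH; last by rewrite above_st.
  by apply: leq_trans le_im; rewrite ltn_sub2l ?(leq_ltn_trans lt_ij).
apply: (@rank_in_inj _ (exceedance_candidates s i)).
- exact: mem_exceedance_candidates lt_is.
- by rewrite eq_cand; apply: mem_exceedance_candidates; rewrite -above_st.
- by move/(_ i): exceedance_rank_st; rewrite inE /exceedance_rank eq_cand; apply.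
Qed.

Lemma decode_perm : s = t.
Proof.
by apply/permP=> i; case: (leqP (s i) i) => [/decode_nonexceedance | /decode_exceedance].
Qed.

End Decoding.

Section Code.
Variables (k l : nat).
Implicit Types (s t : 'S_l) (i : 'I_l).

Definition perm_code s i : nat :=
  if s i < i then (deficiency_rank s i).+1
  else if i < s i then (k + exceedance_rank s i).+1 else 0.

Lemma perm_code_deficiency s i : s i < i -> perm_code s i = (deficiency_rank s i).+1.
Proof. by rewrite /perm_code => ->. Qed.

Lemma perm_code_exceedance s i : i < s i -> perm_code s i = (k + exceedance_rank s i).+1.
Proof. by move=> lt_is; rewrite /perm_code ltnNge (ltnW lt_is) lt_is. Qed.

Lemma perm_code_eq0 s i : (perm_code s i == 0) = (s i == i).
Proof.
rewrite /perm_code -(inj_eq val_inj) /=.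
by case: ltngtP => [/ltn_eqF | /gtn_eqF | fixed_i]; rewrite ?fixed_i ?eqxx.
Qed.

Section CodeBounds.
Variable s : 'S_l.
Hypothesis exceedances_s : #|exceedances s| = k.

Lemma perm_code_le i : perm_code s i <= 2 * k.
Proof.
rewrite /perm_code; case: ifP => [/deficiency_rank_lt | _]; first by rewrite exceedances_s; lia.
by case: ifP => [/exceedance_rank_lt | _] //; rewrite exceedances_s; lia.
Qed.

Lemma deficient_perm_code i : (s i < i) = (0 < perm_code s i <= k).
Proof.
case: (ltngtP (s i) i) => [lt_si | lt_is | fixed_i].
- by have := deficiency_rank_lt lt_si; rewrite perm_code_deficiency // exceedances_s.
- by rewrite perm_code_exceedance //; lia.
- by rewrite /perm_code fixed_i ltnn.
Qed.

Lemma exceeding_perm_code i : (i < s i) = (k < perm_code s i).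
Proof.
case: (ltngtP (s i) i) => [lt_si | lt_is | fixed_i].
- have := deficiency_rank_lt lt_si; rewrite perm_code_deficiency // exceedances_s; lia.
- by rewrite perm_code_exceedance //; lia.
- by rewrite /perm_code fixed_i ltnn.
Qed.

End CodeBounds.

Lemma perm_code_inj s t : #|exceedances s| = k -> #|exceedances t| = k ->
  perm_code s =1 perm_code t -> s = t.
Proof.
move=> exc_s exc_t eq_code.
have deficient_st i : (s i < i) = (t i < i).
  by rewrite (deficient_perm_code exc_s) (deficient_perm_code exc_t) eq_code.
have exceeding_st i : (i < s i) = (i < t i).
  by rewrite (exceeding_perm_code exc_s) (exceeding_perm_code exc_t) eq_code.
apply: decode_perm => [| | i | i]; rewrite ?inE.
- by apply/setP=> i; rewrite !inE deficient_st.
- by apply/setP=> i; rewrite !inE exceeding_st.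
- move=> lt_si; have := eq_code i.
  by rewrite !perm_code_deficiency -?deficient_st // => -[].
- move=> lt_is; have := eq_code i.
  by rewrite !perm_code_exceedance -?exceeding_st // => -[] /addnI.
Qed.

End Code.

Lemma card_moved_points l n (s : 'S_l) :
  n <= l -> #|fixed_points s| = l - n -> #|~: fixed_points s| = n.
Proof. by move=> le_nl fixed_s; have := cardsC (fixed_points s); rewrite card_ord fixed_s; lia. Qed.

Lemma card_Sset_le l n k : n <= l -> #|Sset l n k| <= 'C(l, n) * (2 * k) ^ n.
Proof.
move=> le_nl; have := @card_ffun_support 'I_l 'I_(2 * k).+1 ord0 n; rewrite !card_ord /= => <-.
pose c (s : 'S_l) : {ffun 'I_l -> 'I_(2 * k).+1} := [ffun i => inord (perm_code k s i)].
have cE s i : #|exceedances s| = k -> c s i = perm_code k s i :> nat.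
  by move=> exc_s; rewrite ffunE inordK // ltnS perm_code_le.
rewrite -(card_in_imset (f := c)) => [|s t]; last first.
  rewrite !inE => /andP[_ /eqP exc_s] /andP[_ /eqP exc_t] eq_c.
  by apply: (perm_code_inj exc_s exc_t) => i; rewrite -!cE // eq_c.
apply/subset_leq_card/subsetP=> _ /imsetP[s + ->]; rewrite !inE => /andP[/eqP fixed_s /eqP exc_s].
rewrite -(card_moved_points le_nl fixed_s); apply/eqP/eq_card => i.
by rewrite !inE -(inj_eq val_inj) /= cE // perm_code_eq0.
Qed.

Section MovedPoints.
Variable l : nat.
Implicit Types (s t : 'S_l) (i j m : 'I_l).

Lemma exceedances_sub_moved s : exceedances s \subset ~: fixed_points s.
Proof. by apply/subsetP=> i; rewrite !inE => /gtn_eqF; rewrite -(inj_eq val_inj) eq_sym => ->. Qed.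

Lemma deficienciesE s : deficiencies s = ~: fixed_points s :\: exceedances s.
Proof. by apply/setP=> i; rewrite !inE -(inj_eq val_inj) /=; case: ltngtP. Qed.

Lemma card_deficiencies s : #|deficiencies s| = #|~: fixed_points s| - #|exceedances s|.
Proof. by rewrite deficienciesE cardsD (setIidPr (exceedances_sub_moved s)). Qed.

Lemma min_moved_point_exceedance s m : m \in ~: fixed_points s ->
  {in ~: fixed_points s, forall j, m <= j} -> m \in exceedances s.
Proof.
rewrite !inE => moved_m min_m.
have : s m \in ~: fixed_points s by rewrite !inE (inj_eq perm_inj).
move/min_m; rewrite leq_eqVlt => /orP[/eqP/val_inj fixed_m | //].
by rewrite -fixed_m eqxx in moved_m.
Qed.

Lemma exceedances1_eq s t : #|exceedances s| = 1 -> #|exceedances t| = 1 ->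
  ~: fixed_points s = ~: fixed_points t -> exceedances s = exceedances t.
Proof.
move=> /eqP/cards1P[x exc_s] /eqP/cards1P[y exc_t] moved_st; rewrite exc_s exc_t.
have : x \in ~: fixed_points s by apply: (subsetP (exceedances_sub_moved s)); rewrite exc_s set11.
case/(arg_minnP val) => m moved_m min_m.
have /min_moved_point_exceedance/(_ min_m) := moved_m; rewrite exc_s inE => /eqP <-.
rewrite moved_st in moved_m min_m.
by have /min_moved_point_exceedance/(_ min_m) := moved_m; rewrite exc_t inE => /eqP <-.
Qed.

Lemma moved_points_inj_exceedances1 s t : #|exceedances s| = 1 -> #|exceedances t| = 1 ->
  ~: fixed_points s = ~: fixed_points t -> s = t.
Proof.
move=> exc_s exc_t moved_st; have exc_st := exceedances1_eq exc_s exc_t moved_st.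
have def_st : deficiencies s = deficiencies t by rewrite !deficienciesE moved_st exc_st.
apply: decode_perm => // i; rewrite inE => lt.
- have /deficiency_rank_lt : t i < i by move/setP/(_ i): def_st; rewrite !inE lt.
  by have := deficiency_rank_lt lt; rewrite exc_s exc_t; lia.
- have /exceedance_rank_lt : i < t i by move/setP/(_ i): exc_st; rewrite !inE lt.
  by have := exceedance_rank_lt lt; rewrite exc_s exc_t; lia.
Qed.

End MovedPoints.

Lemma card_Sset1_le l n : n <= l -> #|Sset l n 1| <= 'C(l, n).
Proof.
move=> le_nl; rewrite -[l in 'C(l, _)](card_ord l) -card_draws.
rewrite -(card_in_imset (f := fun s : 'S_l => ~: fixed_points s)) => [|s t].
  apply/subset_leq_card/subsetP=> _ /imsetP[s + ->].
  by rewrite !inE => /andP[/eqP /(card_moved_points le_nl) -> _].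
rewrite !inE => /andP[_ /eqP exc_s] /andP[_ /eqP exc_t].
exact: moved_points_inj_exceedances1.
Qed.

Section Reversal.
Variable l : nat.
Implicit Types (s t : 'S_l) (i : 'I_l).

Definition rev_perm : 'S_l := perm (@rev_ord_inj l).

Lemma card_fixed_points_conjg s t : #|fixed_points (s ^ t)| = #|fixed_points s|.
Proof.
rewrite -(card_preimset _ (@perm_inj _ t)); apply: eq_card => i.
by rewrite !inE permJ (inj_eq perm_inj).
Qed.

Lemma card_exceedances_conj_rev s : #|exceedances (s ^ rev_perm)| = #|deficiencies s|.
Proof.
rewrite -(card_preimset _ (@perm_inj _ rev_perm)); apply: eq_card => i.
rewrite !inE permJ !permE /=; have := ltn_ord i; have := ltn_ord (s i); lia.
Qed.

End Reversal.

Lemma card_Sset_le_complement l n k : n <= l -> #|Sset l n k| <= #|Sset l n (n - k)|.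
Proof.
move=> le_nl; rewrite -(card_in_imset (f := fun s : 'S_l => (s ^ rev_perm l)%g)) => [|s t _ _].
  apply/subset_leq_card/subsetP=> _ /imsetP[s + ->]; rewrite !inE => /andP[/eqP fixed_s /eqP exc_s].
  rewrite card_fixed_points_conjg card_exceedances_conj_rev card_deficiencies.
  by rewrite (card_moved_points le_nl fixed_s) fixed_s exc_s !eqxx.
exact: conjg_inj.
Qed.

Theorem mainTheorem8 (l n k : nat) :
  2 <= n -> n <= l -> 1 <= k -> k <= n - 1 ->
  #|Sset l n k| <= 'C(l, n) * theta n k.
Proof.
move=> le_2n le_nl _ _; rewrite /theta.
case: ifP => [/orP[/eqP-> | /eqP->] | _].
- by rewrite muln1 card_Sset1_le.
- apply: leq_trans (card_Sset_le_complement _ le_nl) _.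
  by rewrite (_ : n - (n - 1) = 1) ?muln1 ?card_Sset1_le //; lia.
case: ifP => _.
- apply: leq_trans (card_Sset_le _ le_nl) _.
  by rewrite leq_mul2l leq_exp2r; lia.
- apply: leq_trans (card_Sset_le_complement _ le_nl) _.
  apply: leq_trans (card_Sset_le _ le_nl) _.
  by rewrite leq_mul2l leq_exp2r; lia.
Qed.
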